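(* For $0\le d\le r<\min\{m,n\}$ there is a surjection of $\mathfrak{S}_n\times\mathfrak{S}_m$-modules $R(\mathcal{Z}_{n,m,r})_d\twoheadrightarrow R(\mathcal{Z}_{n,m,r+1})_d$.
   Context: Fix positive integers $n,m$. $\mathbb{C}[\mathbf{x}_{n\times m}]$ is the polynomial ring in variables $x_{i,j}$; $\mathfrak{S}_n\times\mathfrak{S}_m$ acts by $(g,h)\cdot x_{i,j}=x_{g(i),h(j)}$. For finite stable $\mathcal{Z}\subseteq\mathrm{Mat}_{n\times m}(\mathbb{C})$, $R(\mathcal{Z})=\mathbb{C}[\mathbf{x}_{n\times m}]/\mathrm{gr}\,\mathbf{I}(\mathcal{Z})$, where $\mathbf{I}(\mathcal{Z})$ is the vanishing ideal and $\mathrm{gr}\,\mathbf{I}(\mathcal{Z})$ the ideal generated by top-degree homogeneous components of its nonzero elements; $R(\mathcal{Z})_d$ is its degree-$d$ component. $\mathcal{Z}_{n,m,r}$ is the set of $n\times m$ $0/1$ matrices with exactly $r$ ones and at most one $1$ in each row and column. *)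

From HB Require Import structures.
From mathcomp Require Import all_boot all_order all_algebra all_fingroup.
From mathcomp Require Import mpoly.
Set Implicit Arguments. Unset Strict Implicit. Unset Printing Implicit Defensive.
Import GRing.Theory Num.Theory.
Local Open Scope ring_scope.

(* The polynomial ring C[x_{n x m}] is {mpoly C[n * m]}; the variable x_{i,j}
   is 'X_(mxvec_index i j), i.e. variables are indexed by the entries of an
   n x m matrix through MathComp's row-major vectorization. *)
Notation PR C n m := {mpoly C[n * m]}.

Definition xvar (C : nzRingType) (n m : nat) (i : 'I_n) (j : 'I_m) : PR C n m :=
  'X_(mxvec_index i j).

Definition evalM (C : comNzRingType) (n m : nat) (A : 'M[C]_(n, m)) (f : PR C n m) : C :=
  f.@[fun k => mxvec A 0 k].

(* action of (g,h) in S_n x S_m: the ring endomorphism x_{i,j} |-> x_{g i, h j} *)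
Definition xact (C : comNzRingType) (n m : nat) (g : 'S_n) (h : 'S_m) (f : PR C n m)
  : PR C n m :=
  mmap (@mpolyC _ C)
    (fun k => mxvec (\matrix_(i < n, j < m) xvar C (g i) (h j)) 0 k) f.

Definition Zset (C : nzRingType) (n m r : nat) (A : 'M[C]_(n, m)) : Prop :=
  [/\ forall i j, A i j = 0 \/ A i j = 1,
      #|[set ij : 'I_n * 'I_m | A ij.1 ij.2 == 1]| = r,
      forall i, (#|[set j | A i j == 1%R]| <= 1)%N &
      forall j, (#|[set i | A i j == 1%R]| <= 1)%N].

Definition vanish (C : comNzRingType) (n m : nat) (Z : 'M[C]_(n, m) -> Prop)
  (f : PR C n m) : Prop :=
  forall A, Z A -> evalM A f = 0.

(* top-degree homogeneous component of f (f <> 0 has total degree (msize f).-1) *)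
Definition topc (C : nzRingType) (N : nat) (f : {mpoly C[N]}) : {mpoly C[N]} :=
  pihomog mdeg (msize f).-1 f.

Definition in_ideal (C : comNzRingType) (N : nat) (S : {mpoly C[N]} -> Prop)
  (p : {mpoly C[N]}) : Prop :=
  exists (k : nat) (a s : 'I_k -> {mpoly C[N]}),
    (forall i, S (s i)) /\ p = \sum_(i < k) a i * s i.

Definition grI (C : comNzRingType) (n m : nat) (Z : 'M[C]_(n, m) -> Prop)
  (p : PR C n m) : Prop :=
  in_ideal (fun t => exists f, [/\ f != 0, vanish Z f & t = topc f]) p.

From HB Require Import structures.
From mathcomp Require Import all_boot all_order all_algebra all_fingroup.
From mathcomp Require Import mpoly.
From mathcomp Require Import ring zify.
Import GRing.Theory Num.Theory.
Local Open Scope ring_scope.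
Set Implicit Arguments. Unset Strict Implicit. Unset Printing Implicit Defensive.

(* The surjection is induced by the identity on degree-d polynomials, so the
   content is the inclusion (gr I(Z_r))_d ⊆ gr I(Z_{r+1}) for d <= r.  Given f
   vanishing on Z_r, put  E f := Σ_k x_k (f(x - e_k) - f(x))  (euler_diff below).
   At B ∈ Z_{r+1}, B - e_k ∈ Z_r whenever B_k = 1, so (E f)(B) = -(Σ_k B_k) f(B)
   = -(r+1) f(B): hence (r+1) f + E f vanishes on Z_{r+1}.  Moreover E is a
   discrete Euler operator, E f = -(Σ_k x_k ∂_k) f + lower terms, so the top
   component of (r+1) f + E f is (r+1-e) top(f) with e = deg f <= d <= r, a
   nonzero multiple of top(f). *)

Section DiscreteEuler.
Variables (R : comNzRingType) (N : nat).
Implicit Types (f g : {mpoly R[N]}).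

Definition mshift (k : 'I_N) f : {mpoly R[N]} :=
  f \mPo [tuple 'X_l - ((l == k)%:R)%:MP | l < N].

Definition euler_diff f : {mpoly R[N]} :=
  \sum_(k < N) 'X_k * (mshift k f - f).

Definition euler f : {mpoly R[N]} :=
  \sum_(mm <- msupp f) (f@_mm *: 'X_[mm]) *+ mdeg mm.

Lemma euler_diffD f g : euler_diff (f + g) = euler_diff f + euler_diff g.
Proof.
rewrite /euler_diff -big_split; apply: eq_bigr => k _ /=.
by rewrite /mshift comp_mpolyD; ring.
Qed.

Lemma euler_diffZ c f : euler_diff (c *: f) = c *: euler_diff f.
Proof.
rewrite /euler_diff scaler_sumr; apply: eq_bigr => k _ /=.
by rewrite /mshift comp_mpolyZ -scalerBr scalerAr.
Qed.

Lemma euler_diff0 : euler_diff 0 = 0.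
Proof.
by rewrite /euler_diff big1 // => k _; rewrite /mshift comp_mpoly0 subrr mulr0.
Qed.

Lemma euler_diff_sum (I : Type) (s : seq I) (F : I -> {mpoly R[N]}) :
  euler_diff (\sum_(i <- s) F i) = \sum_(i <- s) euler_diff (F i).
Proof. exact: (big_morph euler_diff euler_diffD euler_diff0). Qed.

Lemma mshiftM k f g : mshift k (f * g) = mshift k f * mshift k g.
Proof. exact: rmorphM. Qed.

Lemma mshiftXn k a : mshift k ('X_k ^+ a) = ('X_k - 1) ^+ a.
Proof.
by rewrite /mshift rmorphXn /= comp_mpolyXU -tnth_nth tnth_mktuple eqxx mpolyC1.
Qed.

Lemma mshiftX_free k (mm : 'X_{1..N}) : mm k = 0%N -> mshift k 'X_[mm] = 'X_[mm].
Proof.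
move=> mmk0; rewrite /mshift comp_mpolyX -{1}(comp_mpoly_id 'X_[mm]) comp_mpolyX.
apply: eq_bigr => i _; rewrite !tnth_mktuple.
by case: (eqVneq i k) => [->|ne_ik]; rewrite ?mmk0 ?expr0 //= mpolyC0 subr0.
Qed.

Lemma pihomog_euler e f : pihomog mdeg e (euler f) = pihomog mdeg e f *+ e.
Proof.
rewrite /euler raddf_sum pihomogE -sumrMnl [RHS]big_mkcond /=.
apply: eq_bigr => mm _; rewrite raddfMn /= linearZ /= pihomogX.
by case: eqP => [->|_]; rewrite ?scaler0 ?mul0rn.
Qed.

Lemma msize_euler_le f : (msize (euler f) <= msize f)%N.
Proof.
apply: (leq_trans (msize_sum _ _ _)); apply/bigmax_leqP_seq => mm mm_f _.
rewrite scalerMnr (leq_trans (msizeZ_le _ _)) // -scaler_nat.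
by rewrite (leq_trans (msizeZ_le _ _)) // msizeX msize_mdeg_lt.
Qed.

End DiscreteEuler.

Section DegreeBounds.
Variables (R : idomainType) (N : nat).
Implicit Types (f g : {mpoly R[N]}).

Lemma msizeM_le_pred f g : (msize (f * g) <= (msize f + msize g).-1)%N.
Proof.
have [->|f_neq0] := eqVneq f 0; first by rewrite mul0r msize0.
have [->|g_neq0] := eqVneq g 0; first by rewrite mulr0 msize0.
by rewrite msizeM.
Qed.

Lemma pihomog_msize_le d f : (msize f <= d)%N -> pihomog mdeg d f = 0.
Proof.
move=> f_small; rewrite pihomogE big_seq_cond; apply: big_pred0 => mm.
by apply/negbTE/negP => /andP[/msize_mdeg_lt + /eqP mm_d]; rewrite mm_d; lia.
Qed.

(* x ((x-1)^a - x^a) + a x^a has degree < a: the two leading terms cancel. *)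
Lemma msize_euler_diff_Xn (k : 'I_N) a :
  (msize ('X_k * (('X_k - 1) ^+ a - 'X_k ^+ a) + 'X_k ^+ a *+ a : {mpoly R[N]})
    <= a)%N.
Proof.
elim: a => [|a IHa]; first by rewrite !expr0 subrr mulr0 mulr0n addr0 msize0.
have -> : 'X_k * (('X_k - 1) ^+ a.+1 - 'X_k ^+ a.+1) + 'X_k ^+ a.+1 *+ a.+1 =
    ('X_k - 1) * ('X_k * (('X_k - 1) ^+ a - 'X_k ^+ a) + 'X_k ^+ a *+ a)
    + 'X_k ^+ a *+ a :> {mpoly R[N]} by rewrite !exprS; ring.
have msize_Xk1 : (msize ('X_k - 1 : {mpoly R[N]}) <= 2)%N.
  rewrite (leq_trans (msizeD_le _ _)) // geq_max msizeN msizeX mdeg1 /=.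
  by rewrite -(mpolyC1 N R) msizeC; case: (_ != _).
rewrite (leq_trans (msizeD_le _ _)) // geq_max (leq_trans (msizeM_le_pred _ _)).
  rewrite -scaler_nat (leq_trans (msizeZ_le _ _)) // mpolyXn msizeX mdegMn mdeg1.
  lia.
lia.
Qed.

Lemma msize_euler_diffX_k (mm : 'X_{1..N}) (k : 'I_N) :
  (msize ('X_k * (mshift k 'X_[mm] - 'X_[mm]) + 'X_[mm] *+ mm k : {mpoly R[N]})
    <= mdeg mm)%N.
Proof.
set a := mm k; set mm' := (mm - U_(k) *+ a)%MM.
have mm_split : mm = (mm' + U_(k) *+ a)%MM.
  apply/mnmP => l; rewrite mnmDE mnmBE mulmnE mnm1E.
  by case: (eqVneq k l) => [<-|]; rewrite /a /=; lia.
have mm'k0 : mm' k = 0%N by rewrite mnmBE mulmnE mnm1E eqxx /a; lia.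
have -> : 'X_[mm] = 'X_[mm'] * 'X_k ^+ a :> {mpoly R[N]}.
  by rewrite {1}mm_split mpolyXD mpolyXn.
rewrite mshiftM mshiftX_free // mshiftXn.
have -> : 'X_k * ('X_[mm'] * ('X_k - 1) ^+ a - 'X_[mm'] * 'X_k ^+ a)
    + 'X_[mm'] * 'X_k ^+ a *+ a =
    'X_[mm'] * ('X_k * (('X_k - 1) ^+ a - 'X_k ^+ a) + 'X_k ^+ a *+ a)
    :> {mpoly R[N]} by ring.
have -> : mdeg mm = (mdeg mm' + a)%N by rewrite {1}mm_split mdegD mdegMn mdeg1 mul1n.
rewrite (leq_trans (msizeM_le_pred _ _)) // msizeX.
by have := msize_euler_diff_Xn k a; lia.
Qed.

Lemma msize_euler_diffX (mm : 'X_{1..N}) :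
  (msize (euler_diff 'X_[mm] + 'X_[mm] *+ mdeg mm : {mpoly R[N]}) <= mdeg mm)%N.
Proof.
rewrite /euler_diff mdegE -sumrMnr -big_split /=.
apply: (leq_trans (msize_sum _ _ _)); apply/bigmax_leqP_seq => k _ _.
by rewrite -mdegE msize_euler_diffX_k.
Qed.

Lemma msize_euler_diffD_euler f :
  (msize (euler_diff f + euler f) <= (msize f).-1)%N.
Proof.
rewrite {1}[f]mpolyE euler_diff_sum /euler -big_split /=.
apply: (leq_trans (msize_sum _ _ _)); apply/bigmax_leqP_seq => mm mm_f _.
rewrite euler_diffZ scalerMnr -scalerDr (leq_trans (msizeZ_le _ _)) //.
apply: (leq_trans (msize_euler_diffX mm)).
by have := msize_mdeg_lt mm_f; lia.
Qed.

Lemma msize_euler_diff_le f : (msize (euler_diff f) <= msize f)%N.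
Proof.
rewrite -[euler_diff f](addrK (euler f)) (leq_trans (msizeD_le _ _)) //.
rewrite geq_max msizeN msize_euler_le andbT.
exact: leq_trans (msize_euler_diffD_euler f) (leq_pred _).
Qed.

Lemma topc_euler_diff f :
  pihomog mdeg (msize f).-1 (euler_diff f) = - (topc f *+ (msize f).-1).
Proof.
rewrite -[euler_diff f](addrK (euler f)) raddfB /= pihomog_euler.
by rewrite pihomog_msize_le ?msize_euler_diffD_euler ?sub0r.
Qed.

Lemma topcMn_euler_diff f rho : ((msize f).-1 <= rho)%N ->
  topc f *+ (rho - (msize f).-1) != 0 ->
  topc (f *+ rho + euler_diff f) = topc f *+ (rho - (msize f).-1).
Proof.
move=> e_le_rho top_neq0; set e := (msize f).-1 in e_le_rho top_neq0 *.
set g := f *+ rho + euler_diff f.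
have pihomog_g : pihomog mdeg e g = topc f *+ (rho - e).
  by rewrite raddfD raddfMn /= topc_euler_diff mulrnBr.
have f_neq0 : f != 0 by apply: contraNneq top_neq0 => ->; rewrite /topc raddf0 mul0rn.
have g_le : (msize g <= msize f)%N.
  rewrite (leq_trans (msizeD_le _ _)) // geq_max msize_euler_diff_le andbT.
  by rewrite -scaler_nat msizeZ_le.
have g_gt : (e < msize g)%N.
  rewrite ltnNge; apply: contra top_neq0 => /pihomog_msize_le.
  by rewrite pihomog_g => ->.
rewrite /topc.
have -> : (msize g).-1 = e.
  by have := msize_poly_eq0 f; rewrite (negbTE f_neq0) /e; lia.
exact: pihomog_g.
Qed.

End DegreeBounds.

Section ZeroOneMatrices.
Variables (R : comNzRingType) (n m : nat).
Implicit Types (B : 'M[R]_(n, m)).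

Lemma Zset_sub_delta r B i j :
  Zset r.+1 B -> B i j = 1 -> Zset r (B - delta_mx i j).
Proof.
case=> B01 card_B rows_B cols_B Bij.
have BdE a b : (B - delta_mx i j) a b = if (a == i) && (b == j) then 0 else B a b.
  rewrite !mxE; case: (a =P i) => [->|] /=; case: (b =P j) => [->|] /=;
  by rewrite ?Bij ?subrr ?subr0.
have Bd1 a b : (B - delta_mx i j) a b == 1 -> B a b == 1.
  by rewrite BdE; case: ifP => // _; rewrite eq_sym oner_eq0.
split.
- by move=> a b; rewrite BdE; case: ifP => _; [left | exact: B01].
- have -> : [set ab : 'I_n * 'I_m | (B - delta_mx i j) ab.1 ab.2 == 1] =
            [set ab : 'I_n * 'I_m | B ab.1 ab.2 == 1] :\ (i, j).
    apply/setP => -[a b]; rewrite !inE BdE /= xpair_eqE.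
    by case: ((a == i) && (b == j)); rewrite //= eq_sym oner_eq0.
  have := cardsD1 (i, j) [set ab : 'I_n * 'I_m | B ab.1 ab.2 == 1].
  by rewrite card_B inE /= Bij eqxx add1n => -[].
- move=> a; apply: leq_trans (rows_B a); apply: subset_leq_card.
  by apply/subsetP => b; rewrite !inE; apply: Bd1.
- move=> b; apply: leq_trans (cols_B b); apply: subset_leq_card.
  by apply/subsetP => a; rewrite !inE; apply: Bd1.
Qed.

Lemma Zset_sum_mxvec r B : Zset r B -> \sum_(k < n * m) mxvec B 0 k = r%:R.
Proof.
case=> B01 card_B _ _.
rewrite (reindex _ (curry_mxvec_bij n m)) /=.
rewrite (eq_bigr (fun ab => B ab.1 ab.2)); last by move=> [a b] _; rewrite mxvecE.
rewrite (bigID (fun ab => B ab.1 ab.2 == 1)) /= [X in _ + X]big1 ?addr0; last first.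
  by move=> ab /negbTE; case: (B01 ab.1 ab.2) => ->; rewrite ?eqxx.
by rewrite (eq_bigr (fun _ => 1)) => [|ab /eqP //]; rewrite sumr_const -card_B cardsE.
Qed.

Lemma vanish_euler_diff r (f : {mpoly R[n * m]}) :
  vanish (@Zset R n m r) f ->
  vanish (@Zset R n m r.+1) (f *+ r.+1 + euler_diff f).
Proof.
move=> f_van B ZB; rewrite /evalM; set v := fun k => mxvec B 0 k.
have term_eval k : ('X_k * (mshift k f - f)).@[v] = - (v k * f.@[v]).
  rewrite mevalM mevalB mevalXU /mshift comp_mpoly_meval.
  case: (mxvec_indexP k) => i j; rewrite /v mxvecE.
  case: (ZB) => B01 _ _ _; case: (B01 i j) => Bij; rewrite Bij.
    by rewrite !mul0r oppr0.
  have := f_van _ (Zset_sub_delta ZB Bij); rewrite /evalM => f0.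
  rewrite (@meval_eq _ _ _ (fun l => mxvec (B - delta_mx i j) 0 l)) ?f0 ?sub0r ?mulrN //.
  move=> l; rewrite tnth_mktuple mevalB mevalXU mevalC linearB /= mxvec_delta !mxE.
  by rewrite eqxx /= eq_sym.
rewrite mevalD mevalMn /euler_diff raddf_sum /= (eq_bigr _ (fun k _ => term_eval k)).
by rewrite sumrN -mulr_suml (Zset_sum_mxvec ZB) mulr_natl subrr.
Qed.

End ZeroOneMatrices.

Section Ideals.
Variables (R : comNzRingType) (N : nat).
Implicit Types (S T : {mpoly R[N]} -> Prop).

Lemma in_ideal0 S : in_ideal S 0.
Proof. by exists 0%N, (fun _ => 0), (fun _ => 0); split; [case | rewrite big_ord0]. Qed.

Lemma in_ideal_gen S t : S t -> in_ideal S t.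
Proof.
by move=> St; exists 1%N, (fun _ => 1), (fun _ => t); rewrite big_ord1 mul1r.
Qed.

Lemma in_idealD S p q : in_ideal S p -> in_ideal S q -> in_ideal S (p + q).
Proof.
move=> [k1 [a1 [s1 [Ss1 ->]]]] [k2 [a2 [s2 [Ss2 ->]]]].
pose glue (u v : _ -> {mpoly R[N]}) i :=
  match split i with inl j => u j | inr j => v j end.
exists (k1 + k2)%N, (glue _ _ a1 a2), (glue _ _ s1 s2); split.
  by move=> i; rewrite /glue; case: (split i).
rewrite big_split_ord /glue; congr (_ + _); apply: eq_bigr => i _.
  by rewrite -[lshift _ _]/(unsplit (inl i)) unsplitK.
by rewrite -[rshift _ _]/(unsplit (inr i)) unsplitK.
Qed.

Lemma in_idealMl S c p : in_ideal S p -> in_ideal S (c * p).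
Proof.
move=> [k [a [s [Ss ->]]]]; exists k, (fun i => c * a i), s; split => //.
by rewrite mulr_sumr; apply: eq_bigr => i _; rewrite mulrA.
Qed.

Lemma in_ideal_sum S (I : Type) (r : seq I) (P : pred I) (F : I -> {mpoly R[N]}) :
  (forall i, P i -> in_ideal S (F i)) -> in_ideal S (\sum_(i <- r | P i) F i).
Proof. by move=> SF; apply: big_ind => //; [apply: in_ideal0 | apply: in_idealD]. Qed.

Lemma in_ideal_homog_subset S T d p :
  (forall t, S t -> exists2 e, t \is e.-homog & ((e <= d)%N -> in_ideal T t)) ->
  p \is d.-homog -> in_ideal S p -> in_ideal T p.
Proof.
move=> S_homog p_homog [k [a [s [Ss p_def]]]].
rewrite -(pihomog_dE p_homog) p_def raddf_sum /=; apply: in_ideal_sum => i _.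
have [e s_homog s_low] := S_homog _ (Ss i).
rewrite [a i](pihomog_partitionE (leqnn (msize (a i)))) mulr_suml raddf_sum /=.
apply: in_ideal_sum => t _.
have as_homog := dhomogM (pihomogP mdeg t (a i)) s_homog.
have [te_d|] := eqVneq (t + e)%N d; last first.
  by move=> te_neq_d; rewrite (pihomog_ne0 te_neq_d as_homog); apply: in_ideal0.
rewrite pihomog_dE -?te_d //; apply/in_idealMl/s_low; lia.
Qed.

End Ideals.

Lemma grI_top_succ (R : numFieldType) (n m r d : nat) (f : PR R n m) :
  (d <= r)%N -> f != 0 -> vanish (@Zset R n m r) f ->
  exists2 e, topc f \is e.-homog & ((e <= d)%N -> grI (@Zset R n m r.+1) (topc f)).
Proof.
move=> d_le_r f_neq0 f_van; exists (msize f).-1; first exact: pihomogP.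
move=> e_le_d; have [->|top_neq0] := eqVneq (topc f) 0; first exact: in_ideal0.
set c := (r.+1 - (msize f).-1)%N.
have c_neq0 : (c%:R : R) != 0 by rewrite pnatr_eq0 /c; lia.
have ctop_neq0 : topc f *+ c != 0 by rewrite -scaler_nat scaler_eq0 negb_or c_neq0.
have top_g := topcMn_euler_diff (leqW (leq_trans e_le_d d_le_r)) ctop_neq0.
have -> : topc f = (c%:R^-1)%:MP * topc (f *+ r.+1 + euler_diff f).
  by rewrite top_g mul_mpolyC -scaler_nat scalerA mulVf // scale1r.
apply/in_idealMl/in_ideal_gen; exists (f *+ r.+1 + euler_diff f); split => //.
- by apply: contraNneq ctop_neq0 => g0; rewrite -top_g g0 /topc raddf0.
- exact: vanish_euler_diff.
Qed.

(* The hypothesis r < min m n only makes Z_{r+1} nonempty; the inclusion of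
   ideals below does not need it. *)
Theorem mainTheorem10 (C : numClosedFieldType) (n m r d : nat) :
  (d <= r)%N -> (r < minn m n)%N ->
  exists phi : {linear PR C n m -> PR C n m},
    [/\ (* phi maps R_d-representatives to R_d-representatives *)
        forall p : PR C n m, p \is d.-homog -> phi p \is d.-homog,
        (* well defined on the quotient: (gr I(Z_r))_d is sent into gr I(Z_{r+1}) *)
        forall p : PR C n m, p \is d.-homog ->
          grI (@Zset C n m r) p -> grI (@Zset C n m r.+1) (phi p),
        (* S_n x S_m-equivariant modulo gr I(Z_{r+1}) *)
        forall (g : 'S_n) (h : 'S_m) (p : PR C n m), p \is d.-homog ->
          grI (@Zset C n m r.+1) (phi (xact g h p) - xact g h (phi p)) &
        (* surjective onto R(Z_{r+1})_d *)
        forall q : PR C n m, q \is d.-homog ->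
          exists2 p : PR C n m, p \is d.-homog &
            grI (@Zset C n m r.+1) (q - phi p)].
Proof.
move=> d_le_r _; exists idfun; split => //.
- move=> p p_homog; apply: in_ideal_homog_subset p_homog => _ [f [f_neq0 f_van ->]].
  exact: grI_top_succ.
- by move=> g h p _; rewrite /= subrr; apply: in_ideal0.
- by move=> q q_homog; exists q => //; rewrite /= subrr; apply: in_ideal0.
Qed.
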